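(* For every $d$-dimensional state $\rho$, every $\epsilon>0$ and every real-valued function $f$ on the set of probability distributions on $[d]$, \[ \min_{q\in V_\epsilon(\delta_\rho)}f(q)\le\min_{\sigma\in V_\epsilon(\rho)}f(\delta_\sigma)\le\min_{q\in V_{\epsilon^2/4}(\delta_\rho)}f(q). \]
   Context: Fixed computational basis; $\Pi_I=\sum_{i\in I}|i\rangle\langle i|$. For a state $\omega$, $\delta_\omega\in\mathbb R^d$ is its diagonal, $(\delta_\omega)_j=\omega_{jj}$. Quantum set: $V_\epsilon(\rho)=\{\Pi_I\rho\Pi_I/\mathrm{Tr}[\rho\Pi_I]:\ I\subseteq[d]\}\cap\{\sigma:\|\sigma-\rho\|_1\le\epsilon\}$ (only $I$ with $\mathrm{Tr}[\rho\Pi_I]>0$). Classical set for a probability vector $p\in\mathbb R^d$: $V_\epsilon(p)=\{\Pi_Ip/\sum_{i\in I}p_i:\ I\subseteq[d]\}\cap\{q:|q-p|_1\le\epsilon\}$ (only $I$ with $\sum_{i\in I}p_i>0$), $|\cdot|_1$ the $\ell_1$ norm and $\Pi_Ip$ the vector keeping the entries of $p$ indexed by $I$ and zeroing the others. *)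

From HB Require Import structures.
From mathcomp Require Import all_boot all_order all_algebra.
From mathcomp.real_closed Require Import complex.
Set Implicit Arguments. Unset Strict Implicit. Unset Printing Implicit Defensive.
Import Order.TTheory GRing.Theory Num.Theory.
Local Open Scope ring_scope.

Section Defs.
Variable R : rcfType.
Local Notation C := R[i].

Definition adjmx m n (A : 'M[C]_(m, n)) : 'M[C]_(n, m) := (map_mx Num.conj A)^T.

(* positive semidefinite: v^* A v is real and >= 0 for every vector v *)
Definition psd d (A : 'M[C]_d) : Prop :=
  forall v : 'cV[C]_d, 0 <= (adjmx v *m A *m v) 0 0.

Definition is_state d (rho : 'M[C]_d) : Prop := psd rho /\ \tr rho = 1.

(* t is the trace norm ||A||_1 = Tr sqrt(A^* A), where sqrt is the
   (unique) positive semidefinite square root *)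
Definition is_trace_norm d (A : 'M[C]_d) (t : R) : Prop :=
  exists S : 'M[C]_d, [/\ psd S, S *m S = adjmx A *m A & \tr S = (t%:C)%C].

Definition trnorm_le d (A : 'M[C]_d) (eps : R) : Prop :=
  exists t, is_trace_norm A t /\ t <= eps.

Definition projI d (I : {set 'I_d}) : 'M[C]_d :=
  \matrix_(i, j) ((i == j) && (i \in I))%:R.

Definition diagv d (w : 'M[C]_d) : 'rV[R]_d := \row_j complex.Re (w j j).

Definition l1norm d (p : 'rV[R]_d) : R := \sum_j `|p 0 j|.

Definition Vq d (eps : R) (rho : 'M[C]_d) : 'M[C]_d -> Prop :=
  fun sigma => exists I : {set 'I_d},
    [/\ 0 < \tr (rho *m projI I),
        sigma = (\tr (rho *m projI I))^-1 *: (projI I *m rho *m projI I)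
      & trnorm_le (sigma - rho) eps].

Definition Vc d (eps : R) (p : 'rV[R]_d) : 'rV[R]_d -> Prop :=
  fun q => exists I : {set 'I_d},
    [/\ 0 < \sum_(i in I) p 0 i,
        q = (\sum_(i in I) p 0 i)^-1 *: (\row_j (if j \in I then p 0 j else 0))
      & l1norm (q - p) <= eps].

End Defs.

(* A state sigma in V_eps(rho) has diagonal in V_eps(delta_rho) because the l1 distance of
   diagonals is at most the trace distance: with X the diagonal sign unitary,
   Re tr (X A) <= tr |A|, which follows from the spectral decomposition of |A|.
   Conversely a q in V_(eps^2/4)(delta_rho), obtained from a set I, lies at l1 distance
   2 (1 - p) from delta_rho, where p = tr (rho Pi_I); hence 1 - p <= eps^2/8 and the same
   I gives sigma = Pi rho Pi / p with diagonal q.  That ||sigma - rho||_1 <= eps is the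
   gentle measurement lemma, proved from the positivity of tr (Y rho Y^* ) for
   Y = 4 X (Pi - sqrt p) - eps (Pi + sqrt p), X the sign of sigma - rho. *)

From mathcomp Require Import all_boot all_order all_algebra.
From mathcomp.real_closed Require Import complex.
From mathcomp Require Import ring lra.
Import Order.TTheory GRing.Theory Num.Theory.
Local Open Scope ring_scope.
Set Implicit Arguments. Unset Strict Implicit. Unset Printing Implicit Defensive.

Section Adjoint.
Variable R : rcfType.
Local Notation C := R[i].

Lemma adjmxE m n (A : 'M[C]_(m, n)) i j : adjmx A i j = (A j i)^*.
Proof. by rewrite !mxE. Qed.

Lemma adjmxK m n (A : 'M[C]_(m, n)) : adjmx (adjmx A) = A.
Proof. by apply/matrixP => i j; rewrite !mxE conjCK. Qed.

Lemma adjmxM m n p (A : 'M[C]_(m, n)) (B : 'M[C]_(n, p)) :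
  adjmx (A *m B) = adjmx B *m adjmx A.
Proof. by rewrite /adjmx map_mxM trmx_mul. Qed.

Lemma adjmxD m n (A B : 'M[C]_(m, n)) : adjmx (A + B) = adjmx A + adjmx B.
Proof. by apply/matrixP => i j; rewrite !mxE rmorphD. Qed.

Lemma adjmxN m n (A : 'M[C]_(m, n)) : adjmx (- A) = - adjmx A.
Proof. by apply/matrixP => i j; rewrite !mxE rmorphN. Qed.

Lemma adjmxB m n (A B : 'M[C]_(m, n)) : adjmx (A - B) = adjmx A - adjmx B.
Proof. by rewrite adjmxD adjmxN. Qed.

Lemma adjmxZ m n c (A : 'M[C]_(m, n)) : adjmx (c *: A) = c^* *: adjmx A.
Proof. by apply/matrixP => i j; rewrite !mxE rmorphM. Qed.

Lemma adjmx1 n : adjmx (1%:M : 'M[C]_n) = 1%:M.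
Proof. by apply/matrixP => i j; rewrite !mxE eq_sym rmorph_nat. Qed.

Lemma adjmx_diag_real n (d : 'rV[C]_n) : (forall k, d 0 k \is Num.real) ->
  adjmx (diag_mx d) = diag_mx d.
Proof.
move=> d_real; apply/matrixP => i j; rewrite !mxE eq_sym.
by case: eqP => [->|]; rewrite ?rmorph0 // (CrealP (d_real j)).
Qed.

Lemma adjmx_delta n (i : 'I_n) : adjmx (delta_mx i 0 : 'cV[C]_n) = delta_mx 0 i.
Proof. by apply/matrixP => a b; rewrite !mxE rmorph_nat andbC. Qed.

Lemma form_delta n (S : 'M[C]_n) i j :
  (adjmx (delta_mx i 0 : 'cV[C]_n) *m S *m (delta_mx j 0 : 'cV[C]_n)) 0 0 = S i j.
Proof. by rewrite adjmx_delta -rowE -colE !mxE. Qed.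

Lemma gram_diag_ge0 m n (M : 'M[C]_(m, n)) k : 0 <= (adjmx M *m M) k k.
Proof.
by rewrite mxE; apply: sumr_ge0 => i _; rewrite adjmxE mulrC mul_conjC_ge0.
Qed.

Lemma gram_diag_eq0 m n (M : 'M[C]_(m, n)) k :
  (adjmx M *m M) k k = 0 -> forall i, M i k = 0.
Proof.
have term_ge0 j : true -> 0 <= adjmx M k j * M j k.
  by rewrite adjmxE mulrC mul_conjC_ge0.
rewrite mxE => /(psumr_eq0P term_ge0) term0 i; apply/eqP.
by have /eqP := term0 i isT; rewrite adjmxE mulf_eq0 conjC_eq0 orbb.
Qed.

End Adjoint.

Section Hermitian.
Variable R : rcfType.
Local Notation C := R[i].
Local Notation ecol k := (delta_mx k 0 : 'cV[C]_ _).

Lemma psd_diag_ge0 n (S : 'M[C]_n) i : psd S -> 0 <= S i i.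
Proof. by move/(_ (ecol i)); rewrite form_delta. Qed.

Lemma psd_hermitian n (S : 'M[C]_n) : psd S -> adjmx S = S.
Proof.
move=> S_psd; pose q (v : 'cV[C]_n) := (adjmx v *m S *m v) 0 0.
have q_real (v : 'cV[C]_n) : (q v)^* = q v by apply/CrealP/ger0_real/S_psd.
have entryD (A B : 'M[C]_1) : (A + B) 0 0 = A 0 0 + B 0 0 by rewrite mxE.
have entryZ c (A : 'M[C]_1) : (c *: A) 0 0 = c * A 0 0 by rewrite mxE.
apply/matrixP => i j; rewrite adjmxE.
have Sii : (S i i)^* = S i i by have := q_real (ecol i); rewrite /q form_delta.
have Sjj : (S j j)^* = S j j by have := q_real (ecol j); rewrite /q form_delta.
(* Polarization: the form is real at e_i + c e_j, for c = 1 and c = 'i. *)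
have cross c : (c * S i j + c^* * S j i)^* = c * S i j + c^* * S j i.
  have := q_real (ecol i + c *: ecol j).
  rewrite /q adjmxD adjmxZ !(mulmxDl, mulmxDr) -!(scalemxAl, scalemxAr).
  rewrite !(entryD, entryZ) !form_delta.
  have -> : S i i + c^* * S j i + (c * S i j + c^* * (c * S j j)) =
            (S i i + c^* * c * S j j) + (c * S i j + c^* * S j i) by ring.
  rewrite rmorphD /= [X in X + _ = _]rmorphD /= !rmorphM /= conjCK Sii Sjj.
  by rewrite (mulrC c) => /addrI.
have e1 : (S i j)^* + (S j i)^* = S i j + S j i.
  by have := cross 1; rewrite conjC1 !mul1r rmorphD.
have e2 : (S j i)^* - (S i j)^* = S i j - S j i.
  have := cross 'i; rewrite rmorphD !rmorphM /= conjCK !conjCi.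
  rewrite !mulNr => h; apply: (mulfI (neq0Ci C)).
  by rewrite !mulrBr addrC h.
apply: (@mulfI _ 2); first by rewrite pnatr_eq0.
rewrite !mulr_natl !mulr2n.
transitivity (((S i j)^* + (S j i)^*) + ((S j i)^* - (S i j)^*)); first by ring.
by rewrite e1 e2; ring.
Qed.

Lemma hermitian_spectral n (A : 'M[C]_n) : adjmx A = A ->
  exists (P : 'M[C]_n) (d : 'rV[C]_n),
    [/\ P *m adjmx P = 1%:M, adjmx P *m P = 1%:M,
        A = adjmx P *m diag_mx d *m P & forall k, d 0 k \is Num.real].
Proof.
move=> A_herm; have adjmx_tC m p (M : 'M[C]_(m, p)) : adjmx M = (M ^t*)%sesqui.
  by rewrite /adjmx map_trmx.
have A_hs : A \is hermsymmx.
  by apply/is_hermitianmxP; rewrite expr0 scale1r -adjmx_tC A_herm.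
have /orthomx_spectralP A_eq := hermitian_normalmx A_hs.
have /hermitian_spectral_diag_real/mxOverP d_real := A_hs.
have /unitarymxP P_unitary := spectral_unitarymx A.
exists (spectralmx A), (spectral_diag A).
split; rewrite ?adjmx_tC // -?invmx_unitary ?spectral_unitarymx //.
by rewrite mulVmx // spectral_unit.
Qed.

End Hermitian.

Section TraceNorm.
Variable R : rcfType.
Local Notation C := R[i].

Lemma psd_trace_ge0 n (S : 'M[C]_n) : psd S -> 0 <= \tr S.
Proof. by move=> S_psd; apply: sumr_ge0 => i _; apply: psd_diag_ge0. Qed.

Lemma diag_entry_le_of_gram_diag n (Q : 'M[C]_n) (d : 'rV[C]_n) k :
  adjmx Q *m Q = diag_mx d *m diag_mx d -> (forall j, 0 <= d 0 j) ->
  Q k k + (Q k k)^* <= 2 * d 0 k.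
Proof.
move=> Q_gram d_ge0; set D := diag_mx d.
have D_herm : adjmx D = D by apply/adjmx_diag_real => j; apply: ger0_real.
have DDk : (D *m D) k k = d 0 k * d 0 k by rewrite mulmx_diag !mxE eqxx mulr1n.
have DQk : (D *m Q) k k = d 0 k * Q k k by rewrite mul_diag_mx mxE.
have [dk0|dk_neq0] := eqVneq (d 0 k) 0.
  have Qk0 : Q k k = 0.
    by apply: (gram_diag_eq0 (M := Q)); rewrite Q_gram DDk dk0 mulr0.
  by rewrite Qk0 dk0 conjC0 addr0 mulr0.
have dk_gt0 : 0 < d 0 k by rewrite lt_def dk_neq0 d_ge0.
(* The diagonal of (Q - D)^* (Q - D) = 2 D^2 - D Q - (D Q)^* is nonnegative. *)
have := gram_diag_ge0 (Q - D) k.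
have QD : adjmx Q *m D = adjmx (D *m Q) by rewrite adjmxM D_herm.
rewrite adjmxB D_herm mulmxBl !mulmxBr Q_gram QD.
have entryB (M N : 'M[C]_n) : (M - N) k k = M k k - N k k by rewrite !mxE.
rewrite !entryB adjmxE DDk DQk rmorphM /= (geC0_conj (d_ge0 k)).
have -> : d 0 k * d 0 k - d 0 k * (Q k k)^* - (d 0 k * Q k k - d 0 k * d 0 k)
          = d 0 k * (2 * d 0 k - (Q k k + (Q k k)^*)) by ring.
by rewrite pmulr_rge0 // subr_ge0.
Qed.

Lemma tr_unitary_mul_le n (A S X : 'M[C]_n) :
  psd S -> S *m S = adjmx A *m A -> adjmx X *m X = 1%:M ->
  \tr (X *m A) + (\tr (X *m A))^* <= 2 * \tr S.
Proof.
move=> S_psd SA X_unitary.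
have [P [d [PP' P'P S_eq _]]] := hermitian_spectral (psd_hermitian S_psd).
have PSP : P *m S *m adjmx P = diag_mx d.
  by rewrite S_eq !mulmxA PP' mul1mx -mulmxA PP' mulmx1.
have d_ge0 k : 0 <= d 0 k.
  pose e := delta_mx k 0 : 'cV[C]_n.
  have := S_psd (adjmx P *m e); rewrite adjmxM adjmxK.
  have -> : adjmx e *m P *m S *m (adjmx P *m e) =
            adjmx e *m (P *m S *m adjmx P) *m e by rewrite !mulmxA.
  by rewrite PSP form_delta mxE eqxx mulr1n.
pose Q := P *m X *m A *m adjmx P.
have Q_gram : adjmx Q *m Q = diag_mx d *m diag_mx d.
  rewrite -PSP /Q !adjmxM adjmxK !mulmxA -(mulmxA _ (adjmx P) P) P'P mulmx1.
  rewrite -(mulmxA _ (adjmx X) X) X_unitary mulmx1 -(mulmxA _ (adjmx A) A) -SA.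
  by rewrite !mulmxA -(mulmxA _ (adjmx P) P) P'P mulmx1.
have trQ : \tr Q = \tr (X *m A) by rewrite /Q mxtrace_mulC !mulmxA P'P mul1mx.
have trS : \tr S = \sum_k d 0 k.
  by rewrite S_eq mxtrace_mulC mulmxA PP' mul1mx mxtrace_diag.
rewrite -trQ trS {1 2}/mxtrace rmorph_sum -big_split mulr_sumr /=.
by apply: ler_sum => k _; apply: diag_entry_le_of_gram_diag.
Qed.

Lemma l1norm_diagv_le n (A : 'M[C]_n) t : is_trace_norm A t -> l1norm (diagv A) <= t.
Proof.
move=> [S [S_psd SA trS]].
pose x := \row_j (if 0 <= complex.Re (A j j) then 1 else -1 : C).
have x_real j : x 0 j \is Num.real by rewrite mxE; case: ifP; rewrite ?rpredN1.
have X_unitary : adjmx (diag_mx x) *m diag_mx x = 1%:M.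
  rewrite adjmx_diag_real // mulmx_diag; apply/matrixP => i j; rewrite !mxE.
  by case: ifP; rewrite ?mulrNN mulr1.
have := tr_unitary_mul_le S_psd SA X_unitary.
have -> : \tr (diag_mx x *m A) + (\tr (diag_mx x *m A))^* = (2 * l1norm (diagv A))%:C%C.
  rewrite /mxtrace rmorph_sum -big_split /l1norm mulr_sumr rmorph_sum /=.
  apply: eq_bigr => j _; rewrite mul_diag_mx !mxE.
  case: (A j j) => a b /=; case: ifP => a_ge0; simpc; congr (Complex _ _).
    by rewrite ger0_norm //; ring.
  by rewrite ltr0_norm ?ltNge ?a_ge0 //; ring.
by rewrite trS -(rmorph_nat (real_complex R)) -rmorphM lecR ler_pM2l.
Qed.

Lemma psd_diag_mx n (e : 'rV[C]_n) : (forall k, 0 <= e 0 k) -> psd (diag_mx e).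
Proof.
move=> e_ge0 w; rewrite mul_mx_diag mxE; apply: sumr_ge0 => j _.
by rewrite !mxE mulrAC mulr_ge0 // mulrC mul_conjC_ge0.
Qed.

Lemma psd_conj n (P M : 'M[C]_n) : psd M -> psd (adjmx P *m M *m P).
Proof.
move=> M_psd v; have := M_psd (P *m v).
by rewrite adjmxM !mulmxA.
Qed.

Lemma hermitian_abs n (A : 'M[C]_n) : adjmx A = A -> exists S X : 'M[C]_n,
  [/\ psd S, S *m S = adjmx A *m A, \tr S = \tr (X *m A),
      adjmx X = X & adjmx X *m X = 1%:M].
Proof.
move=> A_herm; have [P [d [PP' P'P A_eq d_real]]] := hermitian_spectral A_herm.
pose conjP M := adjmx P *m M *m P.
have conjPM M N : conjP M *m conjP N = conjP (M *m N).
  by rewrite /conjP -!mulmxA (mulmxA P) PP' mul1mx.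
have tr_conjP M : \tr (conjP M) = \tr M.
  by rewrite /conjP mxtrace_mulC mulmxA PP' mul1mx.
pose sg := \row_k (if 0 <= d 0 k then 1 else -1 : C).
pose ad := \row_k `|d 0 k|.
have sg_real k : sg 0 k \is Num.real by rewrite mxE; case: ifP; rewrite ?rpredN1.
have sgd : diag_mx sg *m diag_mx d = diag_mx ad.
  rewrite mulmx_diag; congr diag_mx; apply/rowP => k; rewrite !mxE.
  case: ifP => [d_ge0|d_lt0]; first by rewrite mul1r ger0_norm.
  by rewrite mulN1r ler0_norm //; move: (d_real k); rewrite realE d_lt0.
have sgsg : diag_mx sg *m diag_mx sg = 1%:M.
  rewrite mulmx_diag -diag_const_mx; congr diag_mx; apply/rowP => k; rewrite !mxE.
  by case: ifP; rewrite ?mulrNN mulr1.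
have adad : diag_mx ad *m diag_mx ad = diag_mx d *m diag_mx d.
  by rewrite !mulmx_diag; congr diag_mx; apply/rowP => k; rewrite !mxE -!expr2 real_normK.
exists (conjP (diag_mx ad)), (conjP (diag_mx sg)).
have X_herm : adjmx (conjP (diag_mx sg)) = conjP (diag_mx sg).
  by rewrite /conjP !adjmxM adjmxK adjmx_diag_real // mulmxA.
split => //.
- by apply: psd_conj; apply: psd_diag_mx => k; rewrite mxE normr_ge0.
- by rewrite A_herm A_eq -/(conjP _) !conjPM adad.
- by rewrite A_eq -/(conjP _) conjPM sgd.
- by rewrite X_herm conjPM sgsg /conjP mulmx1 P'P.
Qed.

End TraceNorm.

Section TraceForm.
Variables (R : rcfType) (n : nat) (rho : 'M[R[i]]_n).
Local Notation C := R[i].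

Definition trform (M N : 'M[C]_n) := \tr (M *m rho *m adjmx N).
Local Notation F := trform.

Lemma trformDl M1 M2 N : F (M1 + M2) N = F M1 N + F M2 N.
Proof. by rewrite /trform !mulmxDl mxtraceD. Qed.

Lemma trformNl M N : F (- M) N = - F M N.
Proof. by rewrite /trform !mulNmx raddfN. Qed.

Lemma trformZl c M N : F (c *: M) N = c * F M N.
Proof. by rewrite /trform -!scalemxAl mxtraceZ. Qed.

Lemma trformDr M N1 N2 : F M (N1 + N2) = F M N1 + F M N2.
Proof. by rewrite /trform adjmxD mulmxDr mxtraceD. Qed.

Lemma trformNr M N : F M (- N) = - F M N.
Proof. by rewrite /trform adjmxN mulmxN raddfN. Qed.

Lemma trformZr c M N : F M (c *: N) = c^* * F M N.
Proof. by rewrite /trform adjmxZ -scalemxAr mxtraceZ. Qed.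

Lemma trform_unitary U M N : adjmx U *m U = 1%:M -> F (U *m M) (U *m N) = F M N.
Proof.
by move=> UU; rewrite /trform adjmxM !mulmxA mxtrace_mulC !mulmxA UU mul1mx.
Qed.

Lemma trform_ge0 M : psd rho -> 0 <= F M M.
Proof.
by move=> rho_psd; apply/psd_trace_ge0; rewrite -{1}[M]adjmxK; apply: psd_conj.
Qed.

Lemma trform_cross_le M N : psd rho -> F M N + F N M <= F M M + F N N.
Proof.
move=> rho_psd; rewrite -subr_ge0.
have := trform_ge0 (M - N) rho_psd.
rewrite !(trformDl, trformNl, trformDr, trformNr).
move: (F M M) (F M N) (F N M) (F N N) => a b c d.
by congr (0 <= _); ring.
Qed.

(* [trform_cross_le] for a X (Pi - c) and b (Pi + c). *)
Lemma trform_proj_shift_le (X Pi : 'M[C]_n) (a b c : C) : psd rho ->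
  a \is Num.real -> b \is Num.real -> c \is Num.real ->
  adjmx Pi = Pi -> Pi *m Pi = Pi -> adjmx X = X -> adjmx X *m X = 1%:M ->
  2 * a * b * (\tr (X *m Pi *m rho *m Pi) - c ^+ 2 * \tr (X *m rho)) <=
  a ^+ 2 * ((1 - 2 * c) * \tr (rho *m Pi) + c ^+ 2 * \tr rho) +
  b ^+ 2 * ((1 + 2 * c) * \tr (rho *m Pi) + c ^+ 2 * \tr rho).
Proof.
move=> rho_psd a_real b_real c_real Pi_herm PiPi X_herm XX.
have := trform_cross_le (a *: (X *m (Pi - c *: 1%:M))) (b *: (Pi + c *: 1%:M)) rho_psd.
rewrite !(trformZl, trformZr) trform_unitary // mulmxBr -scalemxAr mulmx1.
rewrite !(trformDl, trformNl, trformZl, trformDr, trformNr, trformZr).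
rewrite !conj_Creal //.
have -> : F Pi Pi = \tr (rho *m Pi).
  by rewrite /trform Pi_herm mxtrace_mulC mulmxA PiPi mxtrace_mulC.
have -> : F Pi 1%:M = \tr (rho *m Pi) by rewrite /trform adjmx1 mulmx1 mxtrace_mulC.
have -> : F 1%:M Pi = \tr (rho *m Pi) by rewrite /trform Pi_herm mul1mx.
have -> : F 1%:M 1%:M = \tr rho by rewrite /trform adjmx1 mulmx1 mul1mx.
have -> : F (X *m Pi) Pi = \tr (X *m Pi *m rho *m Pi) by rewrite /trform Pi_herm.
have -> : F Pi (X *m Pi) = \tr (X *m Pi *m rho *m Pi).
  by rewrite /trform adjmxM X_herm Pi_herm mulmxA mxtrace_mulC !mulmxA.
have -> : F X Pi = \tr (X *m rho *m Pi) by rewrite /trform Pi_herm.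
have -> : F 1%:M (X *m Pi) = \tr (X *m rho *m Pi).
  by rewrite /trform adjmxM X_herm Pi_herm mul1mx mulmxA mxtrace_mulC !mulmxA.
have -> : F Pi X = \tr (X *m Pi *m rho) by rewrite /trform X_herm mxtrace_mulC mulmxA.
have -> : F (X *m Pi) 1%:M = \tr (X *m Pi *m rho) by rewrite /trform adjmx1 mulmx1.
have -> : F X 1%:M = \tr (X *m rho) by rewrite /trform adjmx1 mulmx1.
have -> : F 1%:M X = \tr (X *m rho) by rewrite /trform X_herm mul1mx mxtrace_mulC.
move: (\tr (X *m Pi *m rho *m Pi)) (\tr (X *m Pi *m rho)) (\tr (X *m rho *m Pi)).
move: (\tr (X *m rho)) (\tr (rho *m Pi)) (\tr rho) => z p r u v w.
by congr (_ <= _); ring.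
Qed.

Lemma gentle_measurement (X Pi : 'M[C]_n) (p eps T : R) :
  psd rho -> \tr rho = 1 -> adjmx Pi = Pi -> Pi *m Pi = Pi ->
  adjmx X = X -> adjmx X *m X = 1%:M ->
  \tr (rho *m Pi) = p%:C%C -> 0 < p <= 1 -> 0 < eps -> 1 - p <= eps ^+ 2 / 8 ->
  \tr (X *m ((p%:C%C)^-1 *: (Pi *m rho *m Pi) - rho)) = T%:C%C -> T <= eps.
Proof.
move=> rho_psd tr1 Pi_herm PiPi X_herm XX trP /andP[p_gt0 p_le1] eps_gt0 p_close.
rewrite mulmxBr -scalemxAr raddfB /= mxtraceZ !mulmxA => T_eq.
have u_eq : \tr (X *m Pi *m rho *m Pi) = p%:C%C * (T%:C%C + \tr (X *m rho)).
  by rewrite -T_eq subrK mulrA mulfV ?mul1r // eq_complex /= eqxx andbT gt_eqF.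
have [s [s_gt0 s_le1 p_eq]] : exists s, [/\ 0 < s, s <= 1 & p = s ^+ 2].
  exists (Num.sqrt p); rewrite sqrtr_gt0 -sqrtr1 ler_sqrt // sqr_sqrtr //.
  exact: ltW.
have real_C (x : R) : x%:C%C \is Num.real by apply/complex_realP; exists x.
(* With a = 4, b = eps, c = sqrt p the bound becomes
   8 eps T <= 32 (1 - c) + 2 eps^2 (1 + c) <= 8 eps^2. *)
have := trform_proj_shift_le rho_psd (rpred_nat _ 4) (real_C eps) (real_C s)
  Pi_herm PiPi X_herm XX.
rewrite tr1 trP u_eq p_eq rmorphXn /=.
move: (\tr (X *m rho)) => z bound.
have : (8 * eps * s ^+ 2 * T)%:C%C <=
       (32 * s ^+ 2 * (1 - s) + 2 * eps ^+ 2 * s ^+ 2 * (1 + s))%:C%C.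
  by move: bound; congr (_ <= _);
     rewrite !(rmorphM, rmorphD, rmorphB, rmorphXn, rmorph_nat, rmorph1) /=; ring.
rewrite lecR => {}bound.
have {}bound : 8 * eps * T <= 32 * (1 - s) + 2 * eps ^+ 2 * (1 + s).
  by rewrite -(ler_pM2r (exprn_gt0 2 s_gt0)); move: bound; congr (_ <= _); ring.
have s_close : 1 - s <= eps ^+ 2 / 8 by apply: le_trans p_close; nra.
rewrite -(ler_pM2l (_ : 0 < 8 * eps)) ?mulr_gt0 //; nra.
Qed.

End TraceForm.

Section Restriction.
Variable R : rcfType.
Local Notation C := R[i].

Lemma projI_diag n (I : {set 'I_n}) : projI R I = diag_mx (\row_j (j \in I)%:R).
Proof.
by apply/matrixP => i j; rewrite !mxE; case: eqVneq => [->|]; rewrite ?mulr1n ?mulr0n.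
Qed.

Lemma projI_herm n (I : {set 'I_n}) : adjmx (projI R I) = projI R I.
Proof.
by rewrite projI_diag adjmx_diag_real // => k; rewrite mxE; case: (k \in I).
Qed.

Lemma projI_idem n (I : {set 'I_n}) : projI R I *m projI R I = projI R I.
Proof.
rewrite projI_diag mulmx_diag; congr diag_mx; apply/rowP => k; rewrite !mxE.
by case: (k \in I); rewrite ?mulr1 ?mulr0.
Qed.

Lemma mulmx_projI_diag n (I : {set 'I_n}) (M : 'M[C]_n) j :
  (M *m projI R I) j j = if j \in I then M j j else 0.
Proof.
by rewrite projI_diag mul_mx_diag !mxE; case: (j \in I); rewrite ?mulr1 ?mulr0.
Qed.

Lemma projI_conj_diag n (I : {set 'I_n}) (M : 'M[C]_n) j :
  (projI R I *m M *m projI R I) j j = if j \in I then M j j else 0.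
Proof.
rewrite mulmx_projI_diag projI_diag mul_diag_mx !mxE.
by case: (j \in I); rewrite ?mul1r.
Qed.

Lemma psd_diagvE n (rho : 'M[C]_n) j : psd rho -> rho j j = (diagv rho 0 j)%:C%C.
Proof. by move=> rho_psd; rewrite mxE RRe_real // ger0_real // psd_diag_ge0. Qed.

Lemma diagv_ge0 n (rho : 'M[C]_n) j : psd rho -> 0 <= diagv rho 0 j.
Proof. by move=> rho_psd; rewrite -ler0c -psd_diagvE // psd_diag_ge0. Qed.

Lemma diagvB n (A B : 'M[C]_n) : diagv (A - B) = diagv A - diagv B.
Proof. by apply/rowP => j; rewrite !mxE raddfB. Qed.

Lemma tr_mul_projI n (rho : 'M[C]_n) (I : {set 'I_n}) : psd rho ->
  \tr (rho *m projI R I) = (\sum_(i in I) diagv rho 0 i)%:C%C.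
Proof.
move=> rho_psd; rewrite /mxtrace rmorph_sum [RHS]big_mkcond /=.
by apply: eq_bigr => j _; rewrite mulmx_projI_diag psd_diagvE //; case: (j \in I).
Qed.

Lemma diagv_restrict n (rho : 'M[C]_n) (I : {set 'I_n}) : psd rho ->
  diagv ((\tr (rho *m projI R I))^-1 *: (projI R I *m rho *m projI R I)) =
  (\sum_(i in I) diagv rho 0 i)^-1 *: \row_j (if j \in I then diagv rho 0 j else 0).
Proof.
move=> rho_psd; apply/rowP => j; rewrite tr_mul_projI //.
rewrite [LHS]mxE [X in complex.Re X]mxE projI_conj_diag [RHS]mxE [in RHS]mxE.
case: (j \in I); last by rewrite !mulr0.
by rewrite psd_diagvE // -fmorphV -rmorphM.
Qed.

Lemma restrict_herm n (rho : 'M[C]_n) (I : {set 'I_n}) : psd rho ->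
  adjmx ((\tr (rho *m projI R I))^-1 *: (projI R I *m rho *m projI R I)) =
  (\tr (rho *m projI R I))^-1 *: (projI R I *m rho *m projI R I).
Proof.
move=> rho_psd; rewrite adjmxZ !adjmxM projI_herm psd_hermitian // mulmxA.
by rewrite tr_mul_projI // -fmorphV conj_Creal //; apply/complex_realP; eexists.
Qed.

Lemma sum_diagv_state n (rho : 'M[C]_n) : is_state rho -> \sum_j diagv rho 0 j = 1.
Proof.
move=> [rho_psd tr1]; apply: (@complexI R); rewrite rmorph_sum rmorph1 -tr1.
by apply: eq_bigr => j _; rewrite psd_diagvE.
Qed.

Lemma l1norm_restrict_sub n (p : 'rV[R]_n) (I : {set 'I_n}) :
  (forall j, 0 <= p 0 j) -> \sum_j p 0 j = 1 -> 0 < \sum_(i in I) p 0 i ->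
  l1norm ((\sum_(i in I) p 0 i)^-1 *: \row_j (if j \in I then p 0 j else 0) - p) =
  2 * (1 - \sum_(i in I) p 0 i).
Proof.
move=> p_ge0 sum1; set P := \sum_(i in I) p 0 i => P_gt0.
have sum_out : \sum_(j | j \notin I) p 0 j = 1 - P.
  by rewrite -sum1 [\sum_j p 0 j](bigID (mem I)) /= addrAC subrr add0r.
have P_le1 : P <= 1 by rewrite -subr_ge0 -sum_out sumr_ge0.
rewrite /l1norm (bigID (mem I)) /=.
have -> : \sum_(j in I) `|((P^-1 *: \row_j (if j \in I then p 0 j else 0)) - p) 0 j| =
          \sum_(j in I) (P^-1 - 1) * p 0 j.
  apply: eq_bigr => j jI; rewrite !mxE jI mulrBl mul1r ger0_norm //.
  by rewrite subr_ge0 ler_peMl // invf_ge1.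
have -> : \sum_(j | j \notin I) `|((P^-1 *: \row_j (if j \in I then p 0 j else 0)) - p) 0 j| =
          \sum_(j | j \notin I) p 0 j.
  by apply: eq_bigr => j /negbTE jI; rewrite !mxE jI mulr0 add0r normrN ger0_norm.
rewrite -mulr_sumr -/P sum_out mulrBl mulVf ?gt_eqF // mul1r.
by rewrite mulr2n mulrDl mul1r.
Qed.

Lemma Vc_diagv_of_Vq n eps (rho sigma : 'M[C]_n) :
  psd rho -> Vq eps rho sigma -> Vc eps (diagv rho) (diagv sigma).
Proof.
move=> rho_psd [I [trI_gt0 -> [t [t_norm t_le]]]].
exists I; split.
- by move: trI_gt0; rewrite tr_mul_projI // ltcR.
- exact: diagv_restrict.
- by rewrite -diagvB; apply: le_trans t_le; apply: l1norm_diagv_le t_norm.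
Qed.

Lemma Vq_diagv_of_Vc n eps (rho : 'M[C]_n) q :
  is_state rho -> 0 < eps -> Vc (eps ^+ 2 / 4) (diagv rho) q ->
  exists2 sigma, Vq eps rho sigma & diagv sigma = q.
Proof.
move=> [rho_psd tr1] eps_gt0 [I [P_gt0 -> l1_le]].
have sum1 := sum_diagv_state (conj rho_psd tr1).
have diagv_rho_ge0 j : 0 <= diagv rho 0 j by exact: diagv_ge0.
move: l1_le; rewrite l1norm_restrict_sub //.
set P := \sum_(i in I) diagv rho 0 i in P_gt0 * => l1_le.
have P_close : 1 - P <= eps ^+ 2 / 8 by lra.
have P_le1 : P <= 1 by rewrite -sum1 [X in _ <= X](bigID (mem I)) /= lerDl sumr_ge0.
have trP : \tr (rho *m projI R I) = P%:C%C by exact: tr_mul_projI.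
exists ((\tr (rho *m projI R I))^-1 *: (projI R I *m rho *m projI R I));
  last exact: diagv_restrict.
have := restrict_herm I rho_psd; set sigma := _ *: _ => sigma_herm.
have : adjmx (sigma - rho) = sigma - rho by rewrite adjmxB sigma_herm psd_hermitian.
move=> /hermitian_abs [S [X [S_psd SA trS X_herm XX]]].
exists I; split => //; first by rewrite trP ltcR.
exists (complex.Re (\tr S)); split.
  by exists S; split => //; rewrite RRe_real // ger0_real // psd_trace_ge0.
apply: (gentle_measurement rho_psd tr1 (projI_herm I) (projI_idem I) X_herm XX trP) => //.
- by rewrite P_gt0 P_le1.
- by rewrite RRe_real ?ger0_real ?psd_trace_ge0 // trS /sigma trP.
Qed.

End Restriction.

Unset Implicit Arguments.

Theorem lemma9 (R : rcfType) (d : nat) (rho : 'M[R[i]]_d) (eps : R)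
    (f : 'rV[R]_d -> R) :
  is_state rho -> 0 < eps ->
  (forall sigma, Vq eps rho sigma ->
     exists2 q, Vc eps (diagv rho) q & f q <= f (diagv sigma)) /\
  (forall q, Vc (eps ^+ 2 / 4) (diagv rho) q ->
     exists2 sigma, Vq eps rho sigma & f (diagv sigma) <= f q).
Proof.
move=> rho_state eps_gt0; split=> [sigma sigma_V | q q_V].
- by exists (diagv sigma) => //; apply: Vc_diagv_of_Vq rho_state.1 sigma_V.
- have [sigma sigma_V sigma_q] := Vq_diagv_of_Vc rho_state eps_gt0 q_V.
  by exists sigma; rewrite ?sigma_q.
Qed.
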